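(* Let $p\ge 2$ be an integer. For all $\mathbf r=(r_1,r_2)\in\mathbb Z^2$, \[ {\rm coeff}_{\left[\zeta_1^{r_1},\,\zeta_{2}^{r_2}\right]} F(\zeta_1,\zeta_2;q)=\mathbb{G}_{\mathbf{r}}(\tau). \]
   Context: $q:=e^{2\pi i\tau}$, $\tau\in\mathbb H$. $Q(\mathbf n):=n_1^2+n_2^2-n_1n_2$; $\mathbb N=\{1,2,3,\dots\}$. \begin{align*} F(\zeta_1,\zeta_2;q)&:=\sum_{n_1,n_2\in\mathbb Z}\frac{q^{pQ\left(n_1-\frac1p,\,n_2-\frac1p\right)}}{\left(1-\zeta_1^{-1}\right)\left(1-\zeta_2^{-1}\right)\left(1-\zeta_1^{-1}\zeta_2^{-1}\right)}\Big(\zeta_1^{n_1-1} \zeta_2^{n_2-1} -\zeta_1^{-n_1+n_2-1}\zeta_2^{n_2-1}\\ &\qquad-\zeta_1^{n_1-1}\zeta_2^{-n_2+n_1-1}+\zeta_1^{-n_2-1} \zeta_2^{-n_2+n_1-1}+\zeta_1^{-n_1+n_2-1} \zeta_2^{-n_1-1}-\zeta_1^{-n_2-1}\zeta_2^{-n_1-1}\Big), \end{align*} where each summand is a Laurent polynomial in $\zeta_1,\zeta_2$, and ${\rm coeff}_{[\zeta_1^{r_1},\zeta_2^{r_2}]}$ is the coefficient of $\zeta_1^{r_1}\zeta_2^{r_2}$. For $\boldsymbol\lambda\in\mathbb Q^2$, \begin{multline*} \mathbb{G}_{\boldsymbol{\lambda}}(\tau):=\sum_{\mathbf{n} \in \mathbb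 N^2} {\rm min}(n_1,n_2)\,q^{p Q\left(\mathbf n+\boldsymbol{\lambda}- \left(\frac1p, \frac1p\right)\right)} \Big(1-q^{2\left(n_1+\lambda_1\right)-\left(n_2+\lambda_2\right)}-q^{2\left(n_2+\lambda_2\right)-\left(n_1+\lambda_1\right)}\\+q^{3\left(n_1+\lambda_1\right)}+q^{3\left(n_2+\lambda_2\right)}-q^{2\left(n_1+\lambda_1\right)+2\left(n_2+\lambda_2\right)}\Big). \end{multline*} *)

From Stdlib Require Import Reals ZArith List.
From Coquelicot Require Import Coquelicot.
Open Scope R_scope.

Definition cexp (z : C) : C :=
  (exp (Re z) * cos (Im z), exp (Re z) * sin (Im z)).

Definition qpow (tau : C) (x : R) : C :=
  cexp (Cmult (RtoC (2 * PI * x)) (Cmult Ci tau)).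

Definition Qf (x1 x2 : R) : R := x1 ^ 2 + x2 ^ 2 - x1 * x2.

(* ---- Laurent polynomials in zeta1, zeta2 with integer coefficients ----
   represented as finite lists of terms ((e1,e2), c) meaning c*zeta1^e1*zeta2^e2 *)
Definition lpoly := list ((Z * Z) * Z).

Definition lcoeff (P : lpoly) (r1 r2 : Z) : Z :=
  fold_right (fun t acc =>
     if (Z.eqb (fst (fst t)) r1 && Z.eqb (snd (fst t)) r2)%bool
     then (snd t + acc)%Z else acc) 0%Z P.

Definition lmul (A B : lpoly) : lpoly :=
  flat_map (fun a => map (fun b =>
     ((fst (fst a) + fst (fst b), snd (fst a) + snd (fst b))%Z,
      (snd a * snd b)%Z)) B) A.

Definition Fden : lpoly :=
  lmul (lmul ((0%Z,0%Z,1%Z) :: (-1,0,-1)%Z :: nil)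
             ((0%Z,0%Z,1%Z) :: (0,-1,-1)%Z :: nil))
       ((0%Z,0%Z,1%Z) :: (-1,-1,-1)%Z :: nil).

Definition Fnum (n1 n2 : Z) : lpoly :=
  ((n1 - 1, n2 - 1), 1)%Z
  :: ((- n1 + n2 - 1, n2 - 1), -1)%Z
  :: ((n1 - 1, - n2 + n1 - 1), -1)%Z
  :: ((- n2 - 1, - n2 + n1 - 1), 1)%Z
  :: ((- n1 + n2 - 1, - n1 - 1), 1)%Z
  :: ((- n2 - 1, - n1 - 1), -1)%Z :: nil.

Definition is_quotient (g : lpoly) (n1 n2 : Z) : Prop :=
  forall m1 m2, lcoeff (lmul g Fden) m1 m2 = lcoeff (Fnum n1 n2) m1 m2.

Definition Fcoeff_partial (p : Z) (g : Z -> Z -> lpoly) (tau : C)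
    (r1 r2 : Z) (N : nat) : C :=
  sum_n (fun i => sum_n (fun j =>
    let n1 := (Z.of_nat i - Z.of_nat N)%Z in
    let n2 := (Z.of_nat j - Z.of_nat N)%Z in
    Cmult (qpow tau (IZR p * Qf (IZR n1 - / IZR p) (IZR n2 - / IZR p)))
          (RtoC (IZR (lcoeff (g n1 n2) r1 r2)))) (2 * N)) (2 * N).

(* square partial sums (0 <= n1, n2 <= N; the n1 = 0 or n2 = 0 terms vanish
   since min(n1,n2) = 0, so this is the sum over 1 <= n1, n2 <= N) of the series G_lambda(tau) *)
Definition G_partial (p : Z) (tau : C) (l1 l2 : R) (N : nat) : C :=
  sum_n (fun i => sum_n (fun j =>
    let n1 := INR i in
    let n2 := INR j in
    let a := n1 + l1 in
    let b := n2 + l2 in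
    Cmult (RtoC (INR (Nat.min i j)))
     (Cmult (qpow tau (IZR p * Qf (a - / IZR p) (b - / IZR p)))
       (Cplus (Cplus (Cplus (Cplus (Cplus (RtoC 1)
          (Copp (qpow tau (2 * a - b))))
          (Copp (qpow tau (2 * b - a))))
          (qpow tau (3 * a)))
          (qpow tau (3 * b)))
          (Copp (qpow tau (2 * a + 2 * b)))))) N) N.

(* Expanded in negative powers of ζ, the coefficient of ζ^m in ζ^(a - (1,1)) / Fden is
   max(0, min(a - m)).  The numerator of F is the signed orbit
   Σ_w sgn(w) ζ^(w n - (1,1)) of the Weyl group of type A_2, so the n-th summand of F is a
   Laurent polynomial whose ζ^r-coefficient is Σ_w sgn(w) max(0, min(w n - r)).  The
   Gaussian decay of q^(pQ(n - ρ/p)), ρ = (1,1), makes every double series in sight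
   absolutely convergent, so the six Weyl terms can be summed separately and reindexed
   by k = w n - r.  This gives Σ_(k ≥ 1) min(k) Σ_w sgn(w) q^(pQ(w⁻¹(k + r) - ρ/p)), and
   the six exponents pQ(w⁻¹ a - ρ/p) differ from pQ(a - ρ/p) by exactly 0, 2a-b, 2b-a,
   3a, 3b and 2a+2b, the exponents in the definition of G. *)

From Stdlib Require Import Reals ZArith List Lia Lra Permutation.
From Coquelicot Require Import Coquelicot.

Open Scope Z_scope.

Definition padd (x y : Z * Z) : Z * Z := (fst x + fst y, snd x + snd y).
Definition psub (x y : Z * Z) : Z * Z := (fst x - fst y, snd x - snd y).
Definition l1norm (x : Z * Z) : Z := Z.abs (fst x) + Z.abs (snd x).

Definition Zpair_eq_dec (x y : Z * Z) : {x = y} + {x <> y}.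
Proof. decide equality; apply Z.eq_dec. Defined.

Definition posmin (x : Z * Z) : Z := Z.max 0 (Z.min (fst x) (snd x)).

Definition zsum {A} (f : A -> Z) (l : list A) : Z :=
  fold_right (fun x acc => f x + acc) 0 l.

Lemma zsum_ext {A} (f g : A -> Z) l : (forall x, f x = g x) -> zsum f l = zsum g l.
Proof. intros H; induction l; simpl; rewrite ?H; lia. Qed.

Lemma zsum_plus {A} (f g : A -> Z) l : zsum (fun x => f x + g x) l = zsum f l + zsum g l.
Proof. induction l; simpl; lia. Qed.

Lemma zsum_mull {A} c (f : A -> Z) l : zsum (fun x => c * f x) l = c * zsum f l.
Proof. induction l; simpl; lia. Qed.

Lemma zsum_swap {A B} (F : A -> B -> Z) la lb :
  zsum (fun a => zsum (F a) lb) la = zsum (fun b => zsum (fun a => F a b) la) lb.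
Proof.
  induction la as [|a la IH]; simpl.
  - induction lb; simpl; lia.
  - rewrite IH, <- zsum_plus. reflexivity.
Qed.

(** * Laurent coefficients and the Weyl group *)

Lemma lcoeff_app A B m1 m2 : lcoeff (A ++ B) m1 m2 = lcoeff A m1 m2 + lcoeff B m1 m2.
Proof. induction A as [|a A IH]; simpl; [|destruct (_ && _)%bool]; lia. Qed.

Lemma lcoeff_map {A} (e : A -> Z * Z) (c : A -> Z) l m1 m2 :
  lcoeff (map (fun x => (e x, c x)) l) m1 m2 =
  zsum (fun x => if ((fst (e x) =? m1) && (snd (e x) =? m2))%bool then c x else 0) l.
Proof. induction l; simpl; [|rewrite IHl; destruct (_ && _)%bool]; lia. Qed.

Lemma lcoeff_lmul A B m1 m2 :
  lcoeff (lmul A B) m1 m2 =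
  zsum (fun b => snd b * lcoeff A (m1 - fst (fst b)) (m2 - snd (fst b))) B.
Proof.
  induction A as [|a A IH]; simpl.
  - induction B; simpl; lia.
  - rewrite lcoeff_app, IH, lcoeff_map, <- zsum_plus.
    apply zsum_ext; intros b; cbn [fst snd].
    destruct (fst (fst a) + fst (fst b) =? m1) eqn:E1;
    destruct (fst (fst a) =? m1 - fst (fst b)) eqn:E1';
    destruct (snd (fst a) + snd (fst b) =? m2) eqn:E2;
    destruct (snd (fst a) =? m2 - snd (fst b)) eqn:E2'; cbn [andb];
    rewrite ?Z.eqb_eq, ?Z.eqb_neq in *; lia.
Qed.

Lemma lcoeff_graph_notin (h : Z * Z -> Z) l m1 m2 : ~ In (m1, m2) l ->
  lcoeff (map (fun m => (m, h m)) l) m1 m2 = 0.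
Proof.
  induction l as [|[a1 a2] l IH]; intros Hm; simpl in *; [reflexivity|].
  destruct (a1 =? m1) eqn:E1, (a2 =? m2) eqn:E2; simpl; auto.
  rewrite Z.eqb_eq in E1, E2; subst; tauto.
Qed.

Lemma lcoeff_graph (h : Z * Z -> Z) l m1 m2 : NoDup l ->
  (~ In (m1, m2) l -> h (m1, m2) = 0) ->
  lcoeff (map (fun m => (m, h m)) l) m1 m2 = h (m1, m2).
Proof.
  intros Hl Hh; destruct (in_dec Zpair_eq_dec (m1, m2) l) as [Hm|Hm];
    [|rewrite lcoeff_graph_notin, Hh; auto].
  clear Hh; induction Hl as [|[a1 a2] l Ha Hl IH]; simpl in *; [tauto|].
  destruct Hm as [E|Hm].
  - injection E as -> ->. rewrite !Z.eqb_refl, lcoeff_graph_notin; auto. simpl; lia.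
  - destruct (a1 =? m1) eqn:E1, (a2 =? m2) eqn:E2; simpl; auto.
    rewrite Z.eqb_eq in E1, E2; subst; tauto.
Qed.

Definition zrange (a : Z) (len : nat) : list Z := map (fun i => a + Z.of_nat i) (seq 0 len).
Definition square (a : Z) (len : nat) : list (Z * Z) := list_prod (zrange a len) (zrange a len).
Definition box (M : nat) : list (Z * Z) := square (- Z.of_nat M) (S (2 * M)).
Definition qbox (N : nat) : list (Z * Z) := square 0 (S N).

Lemma In_zrange a len x : In x (zrange a len) <-> a <= x < a + Z.of_nat len.
Proof.
  unfold zrange; rewrite in_map_iff; split.
  - intros [i [<- Hi]]; apply in_seq in Hi; lia.
  - intros H; exists (Z.to_nat (x - a)); rewrite in_seq; lia.
Qed.

Lemma In_square a len x y :
  In (x, y) (square a len) <-> a <= x < a + Z.of_nat len /\ a <= y < a + Z.of_nat len.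
Proof. unfold square; rewrite in_prod_iff, !In_zrange; tauto. Qed.

Lemma In_box M x y : In (x, y) (box M) <-> Z.abs x <= Z.of_nat M /\ Z.abs y <= Z.of_nat M.
Proof. unfold box; rewrite In_square; lia. Qed.

Lemma incl_box a b : (a <= b)%nat -> incl (box a) (box b).
Proof. intros Hab [x y]; rewrite !In_box; lia. Qed.

Lemma In_qbox N x y : In (x, y) (qbox N) <-> 0 <= x <= Z.of_nat N /\ 0 <= y <= Z.of_nat N.
Proof. unfold qbox; rewrite In_square; lia. Qed.

Lemma NoDup_list_prod {A B} (l1 : list A) (l2 : list B) :
  NoDup l1 -> NoDup l2 -> NoDup (list_prod l1 l2).
Proof.
  intros H1 H2; induction H1 as [|a l1 Ha H1 IH]; simpl; [constructor|].
  apply NoDup_app; auto.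
  - apply FinFun.Injective_map_NoDup; auto. intros x y H; congruence.
  - intros [x y] Hx Hy. apply in_map_iff in Hx as [z [Hz _]].
    injection Hz as <- _. apply in_prod_iff in Hy. tauto.
Qed.

Lemma NoDup_zrange a len : NoDup (zrange a len).
Proof. apply FinFun.Injective_map_NoDup; [intros i j; lia | apply seq_NoDup]. Qed.

Lemma NoDup_square a len : NoDup (square a len).
Proof. apply NoDup_list_prod; apply NoDup_zrange. Qed.

(** The Weyl group of type A_2 acting on exponent vectors, each element with its sign
    and its inverse; [Fnum n1 n2] lists the monomials [ζ^(w n - (1,1))] in this order. *)
Record weyl_elt := WeylElt { wsign : Z; wact : Z * Z -> Z * Z; winv : Z * Z -> Z * Z }.

Definition weyl_s1 (n : Z * Z) : Z * Z := (- fst n + snd n, snd n).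
Definition weyl_s2 (n : Z * Z) : Z * Z := (fst n, - snd n + fst n).
Definition weyl_r1 (n : Z * Z) : Z * Z := (- snd n, - snd n + fst n).
Definition weyl_r2 (n : Z * Z) : Z * Z := (- fst n + snd n, - fst n).
Definition weyl_w0 (n : Z * Z) : Z * Z := (- snd n, - fst n).

Definition weyl : list weyl_elt :=
  WeylElt 1 (fun n => n) (fun n => n) ::
  WeylElt (-1) weyl_s1 weyl_s1 :: WeylElt (-1) weyl_s2 weyl_s2 ::
  WeylElt 1 weyl_r1 weyl_r2 :: WeylElt 1 weyl_r2 weyl_r1 ::
  WeylElt (-1) weyl_w0 weyl_w0 :: nil.

Lemma weyl_spec e : In e weyl ->
  Z.abs (wsign e) = 1 /\
  (forall n, winv e (wact e n) = n) /\ (forall n, wact e (winv e n) = n) /\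
  (forall n, l1norm (wact e n) <= 2 * l1norm n) /\
  (forall n, l1norm (winv e n) <= 2 * l1norm n).
Proof.
  unfold l1norm; intros He; repeat destruct He as [<-|He]; try contradiction;
    cbv [wsign wact winv weyl_s1 weyl_s2 weyl_r1 weyl_r2 weyl_w0 fst snd];
    repeat split; intros [a b]; first [f_equal; lia | lia].
Qed.

Lemma Fnum_weyl n1 n2 :
  Fnum n1 n2 = map (fun e => (psub (wact e (n1, n2)) (1, 1), wsign e)) weyl.
Proof. reflexivity. Qed.

Lemma posmin_eq0 x : fst x <= 0 \/ snd x <= 0 -> posmin x = 0.
Proof. unfold posmin; lia. Qed.

Lemma posmin_ramp_l x : 0 <= fst x -> posmin x = Z.max 0 (snd x) - Z.max 0 (snd x - fst x).
Proof. unfold posmin; lia. Qed.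

Lemma posmin_ramp_r x : 0 <= snd x -> posmin x = Z.max 0 (fst x) - Z.max 0 (fst x - snd x).
Proof. unfold posmin; lia. Qed.

Lemma posmin_diff2 x y :
  posmin (x, y) - posmin (x + -1, y) - posmin (x, y + -1) + posmin (x + -1, y + -1) =
  if ((x =? y) && (0 <? x))%bool then 1 else 0.
Proof.
  unfold posmin; cbn [fst snd].
  destruct (x =? y) eqn:E1, (0 <? x) eqn:E2; cbn [andb];
    rewrite ?Z.eqb_eq, ?Z.eqb_neq, ?Z.ltb_lt, ?Z.ltb_ge in *; lia.
Qed.

(** [posmin (a - m)] is the coefficient of [ζ^m] in [ζ^(a - (1,1)) / Fden] expanded in
    negative powers of [ζ1] and [ζ2]. *)
Lemma Fden_posmin_conv a m1 m2 :
  zsum (fun d => snd d * posmin (psub a (m1 - fst (fst d), m2 - snd (fst d)))) Fden =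
  if ((fst a - 1 =? m1) && (snd a - 1 =? m2))%bool then 1 else 0.
Proof.
  destruct a as [a1 a2]; cbv [zsum Fden lmul flat_map map fold_right fst snd app psub].
  rewrite !Z.sub_sub_distr, <- !Z.add_assoc; cbn [Z.add Pos.add]; rewrite !Z.add_0_r.
  pose proof (posmin_diff2 (a1 - m1) (a2 - m2)) as D1.
  pose proof (posmin_diff2 (a1 - m1 + -1) (a2 - m2 + -1)) as D2.
  rewrite <- !Z.add_assoc in D2; cbn [Z.add Pos.add] in D2.
  destruct (a1 - 1 =? m1) eqn:E1, (a2 - 1 =? m2) eqn:E2,
    (a1 - m1 =? a2 - m2) eqn:E3, (0 <? a1 - m1) eqn:E4,
    (a1 - m1 + -1 =? a2 - m2 + -1) eqn:E5, (0 <? a1 - m1 + -1) eqn:E6;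
    cbn [andb] in *; rewrite ?Z.eqb_eq, ?Z.eqb_neq, ?Z.ltb_lt, ?Z.ltb_ge in *; lia.
Qed.

Definition weyl_coeff (n m : Z * Z) : Z :=
  zsum (fun e => wsign e * posmin (psub (wact e n) m)) weyl.

(* For [m1 < -|n|] every first coordinate of [w n - m] is positive, so [posmin] is a
   difference of two ramps in the other coordinates, and these cancel in pairs. *)
Lemma weyl_coeff_vanish n m :
  l1norm n < Z.abs (fst m) \/ l1norm n < Z.abs (snd m) -> weyl_coeff n m = 0.
Proof.
  destruct n as [n1 n2], m as [m1 m2]; unfold l1norm; cbn [fst snd]; intros H.
  cbv [weyl_coeff zsum weyl fold_right wsign wact weyl_s1 weyl_s2 weyl_r1 weyl_r2
       weyl_w0 psub fst snd].
  assert (Hc : Z.abs n1 + Z.abs n2 < m1 \/ Z.abs n1 + Z.abs n2 < m2 \/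
               m1 < - (Z.abs n1 + Z.abs n2) \/ m2 < - (Z.abs n1 + Z.abs n2)) by lia.
  destruct Hc as [Hc|[Hc|[Hc|Hc]]].
  - rewrite !posmin_eq0 by (cbn [fst snd]; lia). reflexivity.
  - rewrite !posmin_eq0 by (cbn [fst snd]; lia). reflexivity.
  - rewrite !posmin_ramp_l by (cbn [fst snd]; lia); cbn [fst snd].
    replace (- n1 - m2 - (- n2 - m1)) with (n2 - m2 - (n1 - m1)) by ring.
    replace (- n2 + n1 - m2 - (- n2 - m1)) with (n2 - m2 - (- n1 + n2 - m1)) by ring.
    replace (- n1 - m2 - (- n1 + n2 - m1)) with (- n2 + n1 - m2 - (n1 - m1)) by ring.
    ring.
  - rewrite !posmin_ramp_r by (cbn [fst snd]; lia); cbn [fst snd].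
    replace (- n2 - m1 - (- n1 - m2)) with (n1 - m1 - (n2 - m2)) by ring.
    replace (- n2 - m1 - (- n2 + n1 - m2)) with (- n1 + n2 - m1 - (n2 - m2)) by ring.
    replace (- n1 + n2 - m1 - (- n1 - m2)) with (n1 - m1 - (- n2 + n1 - m2)) by ring.
    ring.
Qed.

Definition Fquot (n1 n2 : Z) : lpoly :=
  map (fun m => (m, weyl_coeff (n1, n2) m)) (box (Z.to_nat (l1norm (n1, n2)))).

Lemma lcoeff_Fquot n1 n2 m1 m2 : lcoeff (Fquot n1 n2) m1 m2 = weyl_coeff (n1, n2) (m1, m2).
Proof.
  apply lcoeff_graph; [apply NoDup_square|].
  rewrite In_box; intros Hm; apply weyl_coeff_vanish; cbn [fst snd]; lia.
Qed.

Lemma Fquot_is_quotient n1 n2 : is_quotient (Fquot n1 n2) n1 n2.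
Proof.
  intros m1 m2.
  rewrite lcoeff_lmul, Fnum_weyl, lcoeff_map.
  erewrite zsum_ext by (intros d; rewrite lcoeff_Fquot; unfold weyl_coeff;
                        rewrite <- zsum_mull; reflexivity).
  rewrite zsum_swap; apply zsum_ext; intros e.
  erewrite zsum_ext by (intros d; rewrite Z.mul_assoc, (Z.mul_comm (snd d)),
                                       <- Z.mul_assoc; reflexivity).
  rewrite zsum_mull, Fden_posmin_conv; cbn [psub fst snd].
  destruct (_ && _)%bool; lia.
Qed.

Close Scope Z_scope.
Open Scope R_scope.

(** * Finite sums and dominated double series *)

Definition csum {A} (f : A -> C) (l : list A) : C :=
  fold_right (fun x acc => Cplus (f x) acc) (RtoC 0) l.
Definition rsum {A} (f : A -> R) (l : list A) : R :=
  fold_right (fun x acc => f x + acc) 0 l.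

Lemma csum_ext {A} (f g : A -> C) l : (forall x, f x = g x) -> csum f l = csum g l.
Proof. intros H; induction l; simpl; congruence. Qed.

Lemma csum_app {A} (f : A -> C) l1 l2 : csum f (l1 ++ l2) = (csum f l1 + csum f l2)%C.
Proof. induction l1; simpl; [|rewrite IHl1]; ring. Qed.

Lemma csum_map {A B} (f : B -> C) (g : A -> B) l : csum f (map g l) = csum (fun x => f (g x)) l.
Proof. induction l; simpl; congruence. Qed.

Lemma csum_plus {A} (f g : A -> C) l : csum (fun x => f x + g x)%C l = (csum f l + csum g l)%C.
Proof. induction l; simpl; [|rewrite IHl]; ring. Qed.

Lemma csum_swap {A B} (F : A -> B -> C) la lb :
  csum (fun a => csum (F a) lb) la = csum (fun b => csum (fun a => F a b) la) lb.
Proof.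
  induction la as [|a la IH]; simpl.
  - induction lb; simpl; [|rewrite <- IHlb]; ring.
  - rewrite IH, <- csum_plus. reflexivity.
Qed.

Lemma csum_list_prod {A B} (f : A * B -> C) l1 l2 :
  csum f (list_prod l1 l2) = csum (fun a => csum (fun b => f (a, b)) l2) l1.
Proof. induction l1; simpl; [|rewrite csum_app, csum_map, IHl1]; reflexivity. Qed.

Lemma csum_perm {A} (f : A -> C) l1 l2 : Permutation l1 l2 -> csum f l1 = csum f l2.
Proof. induction 1; simpl; try congruence; ring. Qed.

Lemma csum_filter {A} (P : A -> bool) (f : A -> C) l :
  csum f l = (csum f (filter P l) + csum f (filter (fun x => negb (P x)) l))%C.
Proof. induction l; simpl; [|destruct (P a); simpl; rewrite IHl]; ring. Qed.

Lemma csum_ext_in {A} (f g : A -> C) l :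
  (forall x, In x l -> f x = g x) -> csum f l = csum g l.
Proof. intros H; induction l; simpl in *; [|rewrite H, IHl]; auto. Qed.

Lemma csum_mull {A} c (f : A -> C) l : (c * csum f l)%C = csum (fun x => c * f x)%C l.
Proof. induction l; simpl; [|rewrite <- IHl]; ring. Qed.

Lemma RtoC_IZR_zsum {A} (f : A -> Z) l :
  RtoC (IZR (zsum f l)) = csum (fun x => RtoC (IZR (f x))) l.
Proof. induction l; simpl; [|rewrite plus_IZR, RtoC_plus, IHl]; reflexivity. Qed.

Lemma sum_n_csum (a : nat -> C) n : @eq C (sum_n a n) (csum a (seq 0 (S n))).
Proof.
  induction n as [|n IH]; [rewrite sum_O; simpl; ring|].
  rewrite sum_Sn, IH, (seq_S (S n) 0), csum_app.
  change (plus ?x ?y) with (Cplus x y); simpl; ring.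
Qed.

Lemma sum_n_square (h : Z * Z -> C) a n :
  sum_n (fun i => sum_n (fun j => h (a + Z.of_nat i, a + Z.of_nat j)%Z) n) n =
  csum h (square a (S n)).
Proof.
  unfold square, zrange; rewrite csum_list_prod, csum_map, sum_n_csum.
  apply csum_ext; intros i; rewrite sum_n_csum, csum_map; reflexivity.
Qed.

Lemma rsum_le {A} (f g : A -> R) l : (forall x, f x <= g x) -> rsum f l <= rsum g l.
Proof. intros H; induction l; simpl; [lra|]. specialize (H a). lra. Qed.

Lemma rsum_scal {A} c (f : A -> R) l : rsum (fun x => c * f x) l = c * rsum f l.
Proof. induction l; simpl; [|rewrite IHl]; ring. Qed.

Lemma rsum_perm {A} (f : A -> R) l1 l2 : Permutation l1 l2 -> rsum f l1 = rsum f l2.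
Proof. induction 1; simpl; lra. Qed.

Lemma rsum_filter {A} (P : A -> bool) (f : A -> R) l :
  rsum f (filter P l) = rsum (fun x => if P x then f x else 0) l.
Proof. induction l; simpl; [|destruct (P a); simpl; rewrite IHl]; lra. Qed.

Lemma rsum_cons {A} (f : A -> R) x l : rsum f (x :: l) = f x + rsum f l.
Proof. reflexivity. Qed.

Lemma rsum_app {A} (f : A -> R) l1 l2 : rsum f (l1 ++ l2) = rsum f l1 + rsum f l2.
Proof. induction l1; simpl; lra. Qed.

Lemma rsum_list_prod {A B} (f : A -> R) (g : B -> R) l1 l2 :
  rsum (fun x => f (fst x) * g (snd x)) (list_prod l1 l2) = rsum f l1 * rsum g l2.
Proof.
  induction l1 as [|a l1 IH]; cbn [list_prod]; [simpl; ring|].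
  rewrite rsum_app, IH, rsum_cons.
  replace (rsum _ (map _ l2)) with (f a * rsum g l2); [ring|].
  clear IH; induction l2 as [|b l2 IH2]; cbn [map]; [simpl; ring|].
  rewrite !rsum_cons, <- IH2; cbn [fst snd]; ring.
Qed.

Lemma Cmod_csum_le {A} (f : A -> C) l : Cmod (csum f l) <= rsum (fun x => Cmod (f x)) l.
Proof.
  induction l; simpl; [rewrite Cmod_0; lra|].
  eapply Rle_trans; [apply Cmod_triangle|]. lra.
Qed.

Lemma pow_half_le_1 k : (/ 2) ^ k <= 1.
Proof. rewrite <- (pow1 k); apply pow_incr; lra. Qed.

Definition geom (i : Z) : R := (/ 2) ^ Z.abs_nat i.
Definition geom2 (n : Z * Z) : R := geom (fst n) * geom (snd n).

Lemma geom_pos i : 0 < geom i.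
Proof. apply pow_lt; lra. Qed.

Lemma geom_le_pow m i : (Z.of_nat m <= Z.abs i)%Z -> geom i <= (/ 2) ^ m.
Proof.
  intros H; unfold geom; replace (Z.abs_nat i) with (m + (Z.abs_nat i - m))%nat by lia.
  rewrite pow_add; assert (0 < (/ 2) ^ m) by (apply pow_lt; lra).
  pose proof (pow_half_le_1 (Z.abs_nat i - m)); nra.
Qed.

Lemma geom_le_1 i : geom i <= 1.
Proof. apply (geom_le_pow 0 i); lia. Qed.

Lemma rsum_geom_zrange M : rsum geom (zrange (- Z.of_nat M) (S (2 * M))) = 3 - 2 * (/ 2) ^ M.
Proof.
  induction M as [|M IH]; [cbv [zrange seq map rsum fold_right geom]; simpl; lra|].
  assert (Hp : Permutation (zrange (- Z.of_nat (S M)) (S (2 * S M)))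
                 ((- Z.of_nat (S M))%Z :: Z.of_nat (S M) :: zrange (- Z.of_nat M) (S (2 * M)))).
  { apply NoDup_Permutation.
    - apply NoDup_zrange.
    - apply NoDup_cons; [|apply NoDup_cons; [|apply NoDup_zrange]];
        cbn [In]; rewrite ?In_zrange; lia.
    - intros x; cbn [In]; rewrite !In_zrange; lia. }
  rewrite (rsum_perm _ _ _ Hp), !rsum_cons, IH; unfold geom.
  replace (Z.abs_nat (- Z.of_nat (S M))) with (S M) by lia.
  replace (Z.abs_nat (Z.of_nat (S M))) with (S M) by lia.
  simpl; lra.
Qed.

Lemma rsum_geom2_box M : rsum geom2 (box M) <= 9.
Proof.
  unfold box, square; rewrite (rsum_list_prod geom geom), rsum_geom_zrange.
  assert (0 < (/ 2) ^ M) by (apply pow_lt; lra).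
  pose proof (pow_half_le_1 M); nra.
Qed.

Lemma geom2_sq_le_outside m n : ~ In n (box m) -> geom2 n ^ 2 <= (/ 2) ^ m * geom2 n.
Proof.
  intros Hn.
  assert (Hpos : 0 < geom2 n) by (apply Rmult_lt_0_compat; apply geom_pos).
  assert (Hm : geom2 n <= (/ 2) ^ m).
  { destruct n as [n1 n2]; rewrite In_box in Hn; unfold geom2; cbn [fst snd].
    pose proof (geom_pos n1); pose proof (geom_pos n2).
    pose proof (geom_le_1 n1); pose proof (geom_le_1 n2).
    destruct (Z_le_gt_dec (Z.abs n1) (Z.of_nat m)).
    - assert (geom n2 <= (/ 2) ^ m) by (apply geom_le_pow; lia). nra.
    - assert (geom n1 <= (/ 2) ^ m) by (apply geom_le_pow; lia). nra. }
  simpl; nra.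
Qed.

Lemma ex_pow_half_lt c eps : 0 <= c -> 0 < eps -> exists m : nat, c * (/ 2) ^ m < eps.
Proof.
  intros Hc He.
  destruct (pow_lt_1_zero (/ 2)) with (y := eps / (c + 1)) as [m Hm].
  - rewrite Rabs_pos_eq; lra.
  - apply Rdiv_lt_0_compat; lra.
  - exists m; specialize (Hm m (le_n _)).
    rewrite Rabs_pos_eq in Hm by (apply pow_le; lra).
    apply Rmult_lt_compat_l with (r := c + 1) in Hm; [|lra].
    replace ((c + 1) * (eps / (c + 1))) with eps in Hm by (field; lra).
    assert (0 <= (/ 2) ^ m) by (apply pow_le; lra). nra.
Qed.

Lemma filterlim_Cplus (a b : nat -> C) (A B : C) :
  filterlim a eventually (locally A) -> filterlim b eventually (locally B) ->
  filterlim (fun N => a N + b N)%C eventually (locally (A + B)%C).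
Proof.
  intros Ha Hb; apply (filterlim_comp_2 a b Cplus Ha Hb).
  exact (filterlim_plus (K := C_AbsRing) (V := C_NormedModule) A B).
Qed.

Lemma ex_common_limit_csum {A} (l : list A) (a b : A -> nat -> C) :
  (forall x, In x l -> exists L, filterlim (a x) eventually (locally L) /\
                                 filterlim (b x) eventually (locally L)) ->
  exists L, filterlim (fun N => csum (fun x => a x N) l) eventually (locally L) /\
            filterlim (fun N => csum (fun x => b x N) l) eventually (locally L).
Proof.
  induction l as [|x l IH]; intros H.
  - exists (RtoC 0); split; apply (filterlim_const (F := eventually)).
  - destruct (H x (or_introl eq_refl)) as [Lx [Ha Hb]].
    destruct IH as [L [HaL HbL]]; [intros y Hy; apply H; right; exact Hy|].
    exists (Lx + L)%C; split; apply filterlim_Cplus; assumption.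
Qed.

Section DominatedDoubleSeries.

Variables (f : Z * Z -> C) (K : R).
Hypothesis K_ge0 : 0 <= K.
Hypothesis Cmod_f_le : forall n, Cmod (f n) <= K * geom2 n ^ 2.

(* Off [box m] the dominating weight satisfies [geom2 n ^ 2 <= 2^-m geom2 n], and [geom2]
   sums to at most 9. *)
Lemma Cmod_csum_box_sub_le l m M :
  NoDup l -> incl l (box M) -> (forall n, In n (box m) -> f n <> RtoC 0 -> In n l) ->
  Cmod (csum f (box M) - csum f l)%C <= 9 * K * (/ 2) ^ m.
Proof.
  intros Hl HlM Hsupp.
  set (in_l := fun n => if in_dec Zpair_eq_dec n l then true else false).
  assert (Hperm : Permutation (filter in_l (box M)) l).
  { apply NoDup_Permutation; [apply NoDup_filter, NoDup_square | exact Hl |].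
    intros n; rewrite filter_In; unfold in_l.
    destruct (in_dec Zpair_eq_dec n l); split; try tauto.
    - intros Hn; split; auto.
    - intros [_ E]; discriminate. }
  rewrite (csum_filter in_l f (box M)), (csum_perm _ _ _ Hperm).
  replace (csum f l + csum f (filter (fun n => negb (in_l n)) (box M)) - csum f l)%C
    with (csum f (filter (fun n => negb (in_l n)) (box M))) by ring.
  eapply Rle_trans; [apply Cmod_csum_le|]; rewrite rsum_filter.
  eapply Rle_trans with (rsum (fun n => K * (/ 2) ^ m * geom2 n) (box M)).
  - apply rsum_le; intros n; unfold in_l.
    assert (0 <= K * (/ 2) ^ m * geom2 n).
    { apply Rmult_le_pos; [apply Rmult_le_pos, pow_le; lra|].
      apply Rmult_le_pos; apply Rlt_le, geom_pos. }
    destruct (in_dec Zpair_eq_dec n l) as [|Hn]; cbn [negb]; [lra|].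
    destruct (in_dec Zpair_eq_dec n (box m)) as [Hm|Hm].
    + destruct (Ceq_dec (f n) (RtoC 0)) as [E|E]; [rewrite E, Cmod_0; lra|].
      exfalso; auto.
    + eapply Rle_trans; [apply Cmod_f_le|].
      rewrite Rmult_assoc; apply Rmult_le_compat_l; auto.
      apply geom2_sq_le_outside; exact Hm.
  - rewrite rsum_scal; pose proof (rsum_geom2_box M).
    assert (0 <= K * (/ 2) ^ m) by (apply Rmult_le_pos, pow_le; lra). nra.
Qed.

Lemma ex_filterlim_csum_box : exists L, filterlim (fun N => csum f (box N)) eventually (locally L).
Proof.
  apply (filterlim_locally_cauchy (U := C_CompleteNormedModule)).
  intros eps; destruct (ex_pow_half_lt (9 * K) eps) as [m Hm]; [lra | apply cond_pos |].
  exists (fun N => (m <= N)%nat); split; [exists m; auto|].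
  intros u v Hu Hv; apply (@norm_compat1 C_AbsRing C_NormedModule).
  change (Cmod (csum f (box v) - csum f (box u))%C < eps).
  destruct (Nat.le_gt_cases u v).
  - eapply Rle_lt_trans; [|exact Hm].
    apply Cmod_csum_box_sub_le; [apply NoDup_square | apply incl_box; lia |].
    intros n Hn _; apply (incl_box m u); auto.
  - replace (csum f (box v) - csum f (box u))%C
      with (- (csum f (box u) - csum f (box v)))%C by ring.
    rewrite Cmod_opp.
    eapply Rle_lt_trans; [|exact Hm].
    apply Cmod_csum_box_sub_le; [apply NoDup_square | apply incl_box; lia |].
    intros n Hn _; apply (incl_box m v); auto.
Qed.

Lemma filterlim_csum_exhaustion (L : C) (l : nat -> list (Z * Z)) :
  filterlim (fun N => csum f (box N)) eventually (locally L) ->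
  (forall N, NoDup (l N)) ->
  (forall N, exists M, incl (l N) (box M)) ->
  (forall m, exists N0, forall N, (N0 <= N)%nat ->
     forall n, In n (box m) -> f n <> RtoC 0 -> In n (l N)) ->
  filterlim (fun N => csum f (l N)) eventually (locally L).
Proof.
  intros HL Hnd Hbd Hcov.
  apply (filterlim_locally_ball_norm (K := C_AbsRing) (U := C_NormedModule)).
  intros eps.
  assert (He2 : 0 < eps / 2) by (pose proof (cond_pos eps); lra).
  destruct (ex_pow_half_lt (9 * K) (eps / 2)) as [m Hm]; [lra | exact He2 |].
  destruct (Hcov m) as [N0 HN0]; exists N0; intros N HN.
  destruct (Hbd N) as [M0 HM0].
  destruct (proj1 (filterlim_locally_ball_norm (K := C_AbsRing) (U := C_NormedModule) _ L)
              HL (mkposreal _ He2)) as [N1 HN1].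
  specialize (HN1 (Nat.max M0 N1) ltac:(lia)).
  change (Cmod (csum f (box (Nat.max M0 N1)) - L)%C < eps / 2) in HN1.
  change (Cmod (csum f (l N) - L)%C < eps).
  assert (Hc : Cmod (csum f (box (Nat.max M0 N1)) - csum f (l N))%C <= 9 * K * (/ 2) ^ m).
  { apply Cmod_csum_box_sub_le; auto.
    intros n Hn; apply (incl_box M0); [lia | auto]. }
  replace (csum f (l N) - L)%C
    with ((csum f (box (Nat.max M0 N1)) - L) - (csum f (box (Nat.max M0 N1)) - csum f (l N)))%C
    by ring.
  eapply Rle_lt_trans; [apply Cmod_triangle|]; rewrite Cmod_opp; lra.
Qed.

End DominatedDoubleSeries.

(** * The theta function *)

Lemma Cmod_cexp z : Cmod (cexp z) = exp (Re z).
Proof.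
  unfold cexp, Cmod; cbn [fst snd].
  replace ((exp (Re z) * cos (Im z)) ^ 2 + (exp (Re z) * sin (Im z)) ^ 2)
    with (exp (Re z) ^ 2 * (sin (Im z) ^ 2 + cos (Im z) ^ 2)) by ring.
  rewrite <- !Rsqr_pow2, sin2_cos2, Rsqr_pow2, Rmult_1_r.
  apply sqrt_pow2, Rlt_le, exp_pos.
Qed.

Lemma Cmod_qpow tau x : Cmod (qpow tau x) = exp (- (2 * PI * x * Im tau)).
Proof.
  unfold qpow; rewrite Cmod_cexp; f_equal.
  destruct tau as [a b]; unfold Re, Im, Ci, RtoC; simpl; ring.
Qed.

Lemma cexp_add z w : (cexp z * cexp w)%C = cexp (z + w)%C.
Proof.
  destruct z as [a b], w as [c d]; unfold cexp; simpl.
  rewrite exp_plus, cos_plus, sin_plus; unfold Cmult; simpl; f_equal; ring.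
Qed.

Lemma qpow_add tau x y : (qpow tau x * qpow tau y)%C = qpow tau (x + y).
Proof.
  unfold qpow; rewrite cexp_add; f_equal.
  destruct tau as [a b]; unfold Ci, RtoC, Cmult, Cplus; simpl; f_equal; ring.
Qed.

Definition theta (p : Z) (tau : C) (n : Z * Z) : C :=
  qpow tau (IZR p * Qf (IZR (fst n) - / IZR p) (IZR (snd n) - / IZR p)).

Lemma exp_le_exp x y : x <= y -> exp x <= exp y.
Proof. intros [H|<-]; [apply Rlt_le, exp_increasing; exact H | apply Rle_refl]. Qed.

Lemma exp_neg_abs_le_geom i : exp (- Rabs (IZR i)) <= geom i.
Proof.
  unfold geom; rewrite <- abs_IZR, <- Nat2Z.inj_abs_nat, <- INR_IZR_INZ.
  induction (Z.abs_nat i) as [|k IH]; [simpl; rewrite Ropp_0, exp_0; lra|].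
  rewrite S_INR, Ropp_plus_distr, exp_plus; simpl.
  assert (exp (- (1)) <= / 2).
  { rewrite exp_Ropp; apply Rinv_le_contravar; [lra|].
    pose proof (exp_ineq1_le 1); lra. }
  pose proof (exp_pos (- INR k)); pose proof (exp_pos (- (1))). nra.
Qed.

Lemma Qf_shift_ge x y c : 0 < c <= / 2 ->
  (Rabs x ^ 2 - Rabs x + Rabs y ^ 2 - Rabs y) / 2 <= Qf (x - c) (y - c).
Proof.
  intros Hc; unfold Qf; rewrite !pow2_abs.
  assert (Hsq : forall t, t ^ 2 - Rabs t <= (t - c) ^ 2).
  { intros t; destruct (Rle_or_lt 0 t);
      [rewrite Rabs_pos_eq | rewrite Rabs_left]; nra. }
  pose proof (Hsq x); pose proof (Hsq y); pose proof (pow2_ge_0 (x - y)). nra.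
Qed.

Lemma quadratic_le c k w : 0 < k -> c * w - k * w ^ 2 <= c ^ 2 / (4 * k).
Proof.
  intros Hk; apply Rmult_le_reg_l with (4 * k); [lra|].
  replace (4 * k * (c ^ 2 / (4 * k))) with (c ^ 2) by (field; lra).
  pose proof (pow2_ge_0 (2 * k * w - c)); nra.
Qed.

Section ThetaDecay.

Variables (p : Z) (tau : C).
Hypothesis p_ge2 : (2 <= p)%Z.
Hypothesis Im_tau_gt0 : 0 < Im tau.

Let kappa := PI * Im tau * IZR p.

Lemma kappa_gt0 : 0 < kappa.
Proof.
  pose proof PI_RGT_0; assert (2 <= IZR p) by (apply IZR_le; lia).
  unfold kappa; apply Rmult_lt_0_compat; [apply Rmult_lt_0_compat|]; lra.
Qed.

Lemma Cmod_theta_le n :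
  let u := Rabs (IZR (fst n)) in let v := Rabs (IZR (snd n)) in
  Cmod (theta p tau n) <= exp (- (kappa * (u ^ 2 - u + v ^ 2 - v))).
Proof.
  intros u v; unfold theta; rewrite Cmod_qpow; apply exp_le_exp, Ropp_le_contravar.
  assert (Hp : 2 <= IZR p) by (apply IZR_le; lia).
  assert (Hc : 0 < / IZR p <= / 2)
    by (split; [apply Rinv_0_lt_compat | apply Rinv_le_contravar]; lra).
  pose proof (Qf_shift_ge (IZR (fst n)) (IZR (snd n)) _ Hc) as HQ.
  assert (0 < PI * Im tau) by (apply Rmult_lt_0_compat; [apply PI_RGT_0 | lra]).
  unfold kappa.
  replace (2 * PI * (IZR p * Qf (IZR (fst n) - / IZR p) (IZR (snd n) - / IZR p)) * Im tau)
    with (2 * (PI * Im tau) * IZR p * Qf (IZR (fst n) - / IZR p) (IZR (snd n) - / IZR p)) by ring.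
  replace (PI * Im tau * IZR p * (u ^ 2 - u + v ^ 2 - v))
    with (2 * (PI * Im tau) * IZR p * ((u ^ 2 - u + v ^ 2 - v) / 2)) by field.
  apply Rmult_le_compat_l; [nra | exact HQ].
Qed.

Lemma Cmod_theta_weight_le A n : 0 <= A ->
  Cmod (theta p tau n) * (A + 2 * IZR (l1norm n)) <=
  (A + 1) * exp ((4 + kappa) ^ 2 / (2 * kappa)) * geom2 n ^ 2.
Proof.
  intros HA; pose proof kappa_gt0 as Hk.
  set (u := Rabs (IZR (fst n))); set (v := Rabs (IZR (snd n))).
  assert (Hu : 0 <= u) by apply Rabs_pos; assert (Hv : 0 <= v) by apply Rabs_pos.
  replace (IZR (l1norm n)) with (u + v)
    by (unfold l1norm, u, v; rewrite plus_IZR, !abs_IZR; reflexivity).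
  assert (Hweight : A + 2 * (u + v) <= (A + 1) * exp (2 * u + 2 * v)).
  { pose proof (exp_ineq1_le (2 * u + 2 * v)).
    assert (0 <= A * (exp (2 * u + 2 * v) - 1)) by (apply Rmult_le_pos; lra). nra. }
  assert (Hgauss : exp (- (kappa * (u ^ 2 - u + v ^ 2 - v))) * exp (2 * u + 2 * v) <=
                   exp ((4 + kappa) ^ 2 / (2 * kappa)) * (exp (- u) * exp (- v)) ^ 2).
  { replace ((exp (- u) * exp (- v)) ^ 2) with (exp (- (2 * u) - 2 * v))
      by (simpl; rewrite Rmult_1_r, <- !exp_plus; f_equal; ring).
    rewrite <- !exp_plus; apply exp_le_exp.
    pose proof (quadratic_le (4 + kappa) kappa u Hk).
    pose proof (quadratic_le (4 + kappa) kappa v Hk).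
    replace ((4 + kappa) ^ 2 / (2 * kappa)) with (2 * ((4 + kappa) ^ 2 / (4 * kappa)))
      by (field; lra).
    lra. }
  assert (Hgeom : exp (- u) * exp (- v) <= geom2 n).
  { apply Rmult_le_compat; try (apply Rlt_le, exp_pos); apply exp_neg_abs_le_geom. }
  pose proof (Cmod_theta_le n) as Htheta; cbv zeta in Htheta; fold u v in Htheta.
  assert (0 <= exp (- u) * exp (- v)) by (apply Rlt_le, Rmult_lt_0_compat; apply exp_pos).
  apply Rle_trans with (Cmod (theta p tau n) * ((A + 1) * exp (2 * u + 2 * v))).
  { apply Rmult_le_compat_l; [apply Cmod_ge_0 | exact Hweight]. }
  replace (Cmod (theta p tau n) * ((A + 1) * exp (2 * u + 2 * v)))
    with ((A + 1) * (Cmod (theta p tau n) * exp (2 * u + 2 * v))) by ring.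
  rewrite Rmult_assoc; apply Rmult_le_compat_l; [lra|].
  eapply Rle_trans; [apply Rmult_le_compat_r; [apply Rlt_le, exp_pos | exact Htheta]|].
  eapply Rle_trans; [exact Hgauss|].
  apply Rmult_le_compat_l; [apply Rlt_le, exp_pos | apply pow_incr; lra].
Qed.

End ThetaDecay.

(** The factor [1 - q^(2a-b) - q^(2b-a) + q^(3a) + q^(3b) - q^(2a+2b)] of [G] turns
    [q^(pQ(a - ρ/p))] into its signed orbit under the Weyl group. *)
Lemma theta_weyl_expansion p tau a : p <> 0%Z ->
  let x := IZR (fst a) in let y := IZR (snd a) in
  (theta p tau a *
   (RtoC 1 + - qpow tau (2 * x - y) + - qpow tau (2 * y - x) + qpow tau (3 * x)
    + qpow tau (3 * y) + - qpow tau (2 * x + 2 * y)))%C =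
  csum (fun e => RtoC (IZR (wsign e)) * theta p tau (winv e a))%C weyl.
Proof.
  intros Hp x y; assert (Hpz : IZR p <> 0) by (apply not_0_IZR; exact Hp).
  cbv [csum weyl fold_right wsign winv weyl_s1 weyl_s2 weyl_r1 weyl_r2 weyl_w0].
  unfold theta; cbn [fst snd]; rewrite !plus_IZR, !opp_IZR; fold x y.
  set (T := qpow tau (IZR p * Qf (x - / IZR p) (y - / IZR p))).
  transitivity (T - T * qpow tau (2 * x - y) - T * qpow tau (2 * y - x) + T * qpow tau (3 * x)
      + T * qpow tau (3 * y) - T * qpow tau (2 * x + 2 * y))%C; [ring|].
  unfold T; rewrite !qpow_add.
  replace (IZR p * Qf (x - / IZR p) (y - / IZR p) + (2 * x - y))
    with (IZR p * Qf (- x + y - / IZR p) (y - / IZR p)) by (unfold Qf; field; auto).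
  replace (IZR p * Qf (x - / IZR p) (y - / IZR p) + (2 * y - x))
    with (IZR p * Qf (x - / IZR p) (- y + x - / IZR p)) by (unfold Qf; field; auto).
  replace (IZR p * Qf (x - / IZR p) (y - / IZR p) + 3 * x)
    with (IZR p * Qf (- x + y - / IZR p) (- x - / IZR p)) by (unfold Qf; field; auto).
  replace (IZR p * Qf (x - / IZR p) (y - / IZR p) + 3 * y)
    with (IZR p * Qf (- y - / IZR p) (- y + x - / IZR p)) by (unfold Qf; field; auto).
  replace (IZR p * Qf (x - / IZR p) (y - / IZR p) + (2 * x + 2 * y))
    with (IZR p * Qf (- y - / IZR p) (- x - / IZR p)) by (unfold Qf; field; auto).
  replace (IZR (-1)) with (- (1)) by reflexivity; rewrite RtoC_opp; ring.
Qed.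

(** * Summing the Weyl terms separately *)

Section WeylTerms.

Variables (p : Z) (tau : C) (r : Z * Z).
Hypothesis p_ge2 : (2 <= p)%Z.
Hypothesis Im_tau_gt0 : 0 < Im tau.

Definition weyl_term (e : weyl_elt) (n : Z * Z) : C :=
  (RtoC (IZR (wsign e * posmin (psub (wact e n) r))) * theta p tau n)%C.

Lemma Cmod_weyl_term_le e n : In e weyl ->
  let kappa := PI * Im tau * IZR p in
  Cmod (weyl_term e n) <=
  (IZR (l1norm r) + 1) * exp ((4 + kappa) ^ 2 / (2 * kappa)) * geom2 n ^ 2.
Proof.
  intros He kappa; destruct (weyl_spec e He) as [Hs [_ [_ [Hact _]]]].
  assert (HA : 0 <= IZR (l1norm r)) by (apply IZR_le; unfold l1norm; lia).
  eapply Rle_trans; [|apply (Cmod_theta_weight_le p tau p_ge2 Im_tau_gt0 _ n HA)].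
  unfold weyl_term; rewrite Cmod_mult, Cmod_R, Rmult_comm.
  apply Rmult_le_compat_l; [apply Cmod_ge_0|].
  rewrite <- abs_IZR, <- mult_IZR, <- plus_IZR; apply IZR_le.
  specialize (Hact n); destruct (wact e n) as [a b], r as [r1 r2], n as [n1 n2].
  unfold posmin, psub, l1norm in *; cbn [fst snd] in *.
  rewrite Z.abs_mul, Hs; lia.
Qed.

Lemma weyl_term_limits e : In e weyl ->
  exists L, filterlim (fun N => csum (weyl_term e) (box N)) eventually (locally L) /\
            filterlim (fun N => csum (fun k => weyl_term e (winv e (padd k r))) (qbox N))
              eventually (locally L).
Proof.
  intros He; destruct (weyl_spec e He) as [_ [Hinv [Hact [Hbact Hbinv]]]].
  pose proof (fun n => Cmod_weyl_term_le e n He) as Hdom; cbv zeta in Hdom.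
  set (K := (IZR (l1norm r) + 1) * _) in Hdom.
  assert (HK : 0 <= K).
  { unfold K; apply Rmult_le_pos; [|apply Rlt_le, exp_pos].
    assert (0 <= IZR (l1norm r)) by (apply IZR_le; unfold l1norm; lia). lra. }
  destruct (ex_filterlim_csum_box _ K HK Hdom) as [L HL]; exists L; split; [exact HL|].
  set (phi := fun k => winv e (padd k r)).
  apply (filterlim_ext (fun N => csum (weyl_term e) (map phi (qbox N))));
    [intros N; apply csum_map|].
  apply (filterlim_csum_exhaustion _ K HK Hdom L); [exact HL | | |].
  - intros N; apply FinFun.Injective_map_NoDup; [|apply NoDup_square].
    intros [x1 x2] [y1 y2] E; apply (f_equal (wact e)) in E.
    unfold phi in E; rewrite !Hact in E; unfold padd in E; cbn [fst snd] in E.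
    injection E as E1 E2; f_equal; lia.
  - intros N; exists (Z.to_nat (4 * Z.of_nat N + 2 * l1norm r)).
    intros n Hn; apply in_map_iff in Hn as [[k1 k2] [<- Hk]].
    apply In_qbox in Hk; pose proof (Hbinv (padd (k1, k2) r)) as Hb.
    unfold phi; destruct (winv e (padd (k1, k2) r)) as [n1 n2]; apply In_box.
    destruct r as [r1 r2]; unfold l1norm, padd in *; cbn [fst snd] in *; lia.
  - intros m; exists (Z.to_nat (4 * Z.of_nat m + l1norm r)).
    intros N HN n Hn Hf; apply in_map_iff.
    exists (psub (wact e n) r); split; [unfold phi, padd, psub; cbn [fst snd]|].
    + transitivity (winv e (wact e n)); [|apply Hinv]; f_equal.
      destruct (wact e n); cbn [fst snd]; f_equal; lia.
    + assert (Hpos : posmin (psub (wact e n) r) <> 0%Z).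
      { intros E; apply Hf; unfold weyl_term; rewrite E, Z.mul_0_r; apply Cmult_0_l. }
      pose proof (Hbact n) as Hb; destruct n as [n1 n2]; apply In_box in Hn.
      destruct (wact e (n1, n2)) as [a b], r as [r1 r2].
      unfold posmin, psub, l1norm in *; cbn [fst snd] in *; apply In_qbox; lia.
Qed.

End WeylTerms.

Lemma Fcoeff_partial_weyl p tau r1 r2 N :
  Fcoeff_partial p Fquot tau r1 r2 N =
  csum (fun e => csum (weyl_term p tau (r1, r2) e) (box N)) weyl.
Proof.
  transitivity (csum (fun n => csum (fun e => weyl_term p tau (r1, r2) e n) weyl) (box N));
    [|apply csum_swap].
  unfold box; rewrite <- sum_n_square; unfold Fcoeff_partial.
  apply sum_n_ext; intros i; apply sum_n_ext; intros j; cbv zeta.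
  replace (Z.of_nat i - Z.of_nat N)%Z with (- Z.of_nat N + Z.of_nat i)%Z by lia.
  replace (Z.of_nat j - Z.of_nat N)%Z with (- Z.of_nat N + Z.of_nat j)%Z by lia.
  rewrite lcoeff_Fquot; unfold weyl_coeff; rewrite RtoC_IZR_zsum, csum_mull.
  apply csum_ext; intros e; unfold weyl_term, theta; cbn [fst snd]; ring.
Qed.

Lemma G_partial_weyl p tau r1 r2 N : p <> 0%Z ->
  G_partial p tau (IZR r1) (IZR r2) N =
  csum (fun e => csum (fun k => weyl_term p tau (r1, r2) e (winv e (padd k (r1, r2))))
                      (qbox N)) weyl.
Proof.
  intros Hp.
  transitivity (csum (fun k => csum (fun e => weyl_term p tau (r1, r2) e
                                      (winv e (padd k (r1, r2)))) weyl) (qbox N));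
    [|apply csum_swap].
  unfold qbox; rewrite <- sum_n_square; unfold G_partial.
  apply sum_n_ext; intros i; apply sum_n_ext; intros j; cbv zeta.
  pose proof (theta_weyl_expansion p tau (Z.of_nat i + r1, Z.of_nat j + r2)%Z Hp) as H.
  cbv zeta in H; unfold theta at 1 in H; cbn [fst snd] in H.
  rewrite !plus_IZR, <- !INR_IZR_INZ in H; rewrite H, csum_mull.
  apply csum_ext_in; intros e He; destruct (weyl_spec e He) as [_ [_ [Hact _]]].
  unfold weyl_term, padd; cbn [fst snd]; rewrite !Z.add_0_l, Hact; unfold psub; cbn [fst snd].
  replace (INR (Nat.min i j)) with (IZR (posmin (Z.of_nat i, Z.of_nat j)))
    by (rewrite INR_IZR_INZ; f_equal; unfold posmin; cbn [fst snd]; lia).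
  replace (Z.of_nat i + r1 - r1)%Z with (Z.of_nat i) by lia.
  replace (Z.of_nat j + r2 - r2)%Z with (Z.of_nat j) by lia.
  rewrite mult_IZR, RtoC_mult; ring.
Qed.

Theorem proposition3p2 (p : Z) (hp : (2 <= p)%Z) :
  exists g : Z -> Z -> lpoly,
    (forall n1 n2 : Z, is_quotient (g n1 n2) n1 n2) /\
    forall (tau : C), 0 < Im tau -> forall r1 r2 : Z,
      exists L : C,
        filterlim (Fcoeff_partial p g tau r1 r2) eventually (locally L) /\
        filterlim (G_partial p tau (IZR r1) (IZR r2)) eventually (locally L).
Proof.
  exists Fquot; split; [exact Fquot_is_quotient|].
  intros tau Htau r1 r2.
  destruct (ex_common_limit_csum weyl
              (fun e N => csum (weyl_term p tau (r1, r2) e) (box N))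
              (fun e N => csum (fun k => weyl_term p tau (r1, r2) e (winv e (padd k (r1, r2))))
                               (qbox N)))
    as [L [HF HG]].
  { intros e He; exact (weyl_term_limits p tau (r1, r2) hp Htau e He). }
  exists L; split.
  - eapply filterlim_ext; [|exact HF].
    intros N; symmetry; apply Fcoeff_partial_weyl.
  - eapply filterlim_ext; [|exact HG].
    intros N; symmetry; apply G_partial_weyl; lia.
Qed.
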